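(* The Walnut group $W=(\mathrm{SO}(2,\mathbb{R})\ltimes\mathbb{H})/D$ has the topological $R_\infty$-property.
   Context: $\mathbb{H}$ is the 3-dimensional Heisenberg group of real $3\times3$ upper triangular unipotent matrices; write its element $(y_{ij})$ as $(a,b,c)$ with $a=y_{12}$, $b=y_{23}$, $c=y_{13}$. $\mathrm{GL}(2,\mathbb{R})$ acts on $\mathbb{H}$ by automorphisms via: for $\psi=(x_{ij})\in\mathrm{GL}(2,\mathbb{R})$, $\psi(a,b,c)=\big(x_{11}a+x_{12}b,\ x_{21}a+x_{22}b,\ c\det\psi-\tfrac12ab\det\psi+\tfrac12(x_{11}a+x_{12}b)(x_{21}a+x_{22}b)\big)$. The semidirect product $\mathrm{SO}(2,\mathbb{R})\ltimes\mathbb{H}$ uses the restriction of this action; its center is the center $Z=\{(0,0,c)\}$ of $\mathbb{H}$, and $D$ is an infinite discrete subgroup of $Z$. For an automorphism $\varphi$ of a group $G$, the $\varphi$-twisted conjugacy classes are the equivalence classes of $x\sim_\varphi y$ iff $y=gx\varphi(g)^{-1}$ for some $g\in G$; $R(\varphi)$ is their number. A topological group $G$ has the topological $R_\infty$-property if $R(\varphi)=\infty$ for every automorphism $\varphi$ of $G$ that is a homeomorphism. *)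

From HB Require Import structures.
From mathcomp Require Import all_boot all_order all_algebra generic_quotient.
From mathcomp Require Import all_classical all_reals topology normedtype.
Import numFieldNormedType.Exports.

Set Implicit Arguments.
Unset Strict Implicit.
Unset Printing Implicit Defensive.

Import Order.TTheory GRing.Theory Num.Theory.
Local Open Scope classical_set_scope.
Local Open Scope ring_scope.

Definition group_hom {T : Type} (mul : T -> T -> T) (phi : T -> T) : Prop :=
  forall x y, phi (mul x y) = mul (phi x) (phi y).

Definition homeomorphism {T : topologicalType} (phi : T -> T) : Prop :=
  exists psi : T -> T,
    [/\ cancel phi psi, cancel psi phi, continuous phi & continuous psi].

Definition homeo_automorphism {T : topologicalType} (mul : T -> T -> T)
  (phi : T -> T) : Prop := group_hom mul phi /\ homeomorphism phi.

Definition twisted_conj {T : Type} (mul : T -> T -> T) (inv : T -> T)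
  (phi : T -> T) (x y : T) : Prop :=
  exists g, y = mul (mul g x) (inv (phi g)).

Definition twisted_classes {T : Type} (mul : T -> T -> T) (inv : T -> T)
  (phi : T -> T) : set (set T) :=
  [set [set y | twisted_conj mul inv phi x y] | x in [set: T]].

Definition Reidemeister_infinite {T : Type} (mul : T -> T -> T)
  (inv : T -> T) (phi : T -> T) : Prop :=
  infinite_set (twisted_classes mul inv phi).

Definition topological_R_infinity {T : topologicalType}
  (mul : T -> T -> T) (inv : T -> T) : Prop :=
  forall phi : T -> T, homeo_automorphism mul phi ->
    Reidemeister_infinite mul inv phi.

Section Walnut.
Variable R : realType.

Definition i0 : 'I_2 := @Ordinal 2 0 isT.
Definition i1 : 'I_2 := @Ordinal 2 1 isT.

Definition SO2set : set 'M[R]_2 :=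
  [set A | A^T *m A = 1%:M /\ \det A = 1].
Definition SO2 := set_type SO2set.

Lemma SO2_mul (A B : SO2) : SO2set (val A *m val B).
Proof.
case: A B => [A /set_mem [AA dA]] [B /set_mem [BB dB]] /=; split.
  by rewrite trmx_mul mulmxA -(mulmxA B^T) AA mulmx1 BB.
by rewrite det_mulmx dA dB mulr1.
Qed.

Lemma SO2_inv (A : SO2) : SO2set (val A)^T.
Proof.
case: A => [A /set_mem [AA dA]] /=; split; last by rewrite det_tr.
by rewrite trmxK; apply: mulmx1C.
Qed.

Definition SO2mul (A B : SO2) : SO2 := @exist _ (fun M => M \in SO2set) _ (mem_set (SO2_mul A B)).
Definition SO2inv (A : SO2) : SO2 := @exist _ (fun M => M \in SO2set) _ (mem_set (SO2_inv A)).

(** The Heisenberg group: (a,b,c) stands for the unipotent matrix with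
    y12 = a, y23 = b, y13 = c. *)
Definition Heis := (R * R * R)%type.
Definition ha (h : Heis) : R := h.1.1.
Definition hb (h : Heis) : R := h.1.2.
Definition hc (h : Heis) : R := h.2.

Definition Hmul (h k : Heis) : Heis :=
  (ha h + ha k, hb h + hb k, hc h + hc k + ha h * hb k).
Definition Hinv (h : Heis) : Heis := (- ha h, - hb h, - hc h + ha h * hb h).

Definition Hact (psi : 'M[R]_2) (h : Heis) : Heis :=
  let a := ha h in let b := hb h in let c := hc h in
  let a' := psi i0 i0 * a + psi i0 i1 * b in
  let b' := psi i1 i0 * a + psi i1 i1 * b in
  (a', b', c * \det psi - 2^-1 * a * b * \det psi + 2^-1 * a' * b').

Definition G := (SO2 * Heis)%type.
Definition Gmul (x y : G) : G :=
  (SO2mul x.1 y.1, Hmul x.2 (Hact (val x.1) y.2)).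
Definition Ginv (x : G) : G :=
  (SO2inv x.1, Hact (val (SO2inv x.1)) (Hinv x.2)).

(** Subgroups of the center Z = {(0,0,c)} of H, identified with additive
    subgroups of R through the coordinate c. *)
Record Zsubgroup := {
  zcarrier : set R;
  zsub0 : zcarrier 0;
  zsubB : forall x y, zcarrier x -> zcarrier y -> zcarrier (x - y) }.

Definition discrete_subset (D : set R) : Prop :=
  forall x, D x -> exists2 e : R, 0 < e &
    forall y, D y -> `|y - x| < e -> y = x.

Variable D : Zsubgroup.

(** x ~ y iff x^-1 y lies in D (viewed inside Z), i.e. y = x d with d in D. *)
Definition Drel_prop (x y : G) : Prop :=
  [/\ x.1 = y.1, ha x.2 = ha y.2, hb x.2 = hb y.2 & zcarrier D (hc y.2 - hc x.2)].

Definition Drel (x y : G) : bool := `[< Drel_prop x y >].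

Lemma Drel_equiv : equivalence_rel Drel.
Proof.
have D0 := zsub0 D; have DB := @zsubB D.
have DN z : zcarrier D z -> zcarrier D (- z) by move=> Dz; rewrite -sub0r; exact: DB.
move=> x y z; rewrite /Drel; split.
  by apply/asboolP; split => //; rewrite subrr.
move/asboolP=> [e1 e2 e3 e4].
apply/idP/idP => /asboolP [f1 f2 f3 f4]; apply/asboolP; split;
  try congruence.
- have -> : hc z.2 - hc y.2 = (hc z.2 - hc x.2) - (hc y.2 - hc x.2)
    by rewrite opprB addrA subrK.
  exact: DB.
- have -> : hc z.2 - hc x.2 = (hc z.2 - hc y.2) - (- (hc y.2 - hc x.2))
    by rewrite opprK addrA subrK.
  exact: DB _ _ f4 (DN _ e4).
Qed.

Lemma Drel_refl : reflexive Drel.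
Proof. by move=> x; case: (Drel_equiv x x x). Qed.

Lemma Drel_sym_imp x y : Drel x y -> Drel y x.
Proof. by move=> h; case: (Drel_equiv x y x) => _ /(_ h) <-; exact: Drel_refl. Qed.

Lemma Drel_sym : symmetric Drel.
Proof. by move=> x y; apply/idP/idP; exact: Drel_sym_imp. Qed.

Lemma Drel_trans : transitive Drel.
Proof.
move=> y x z hxy hyz; case: (Drel_equiv x y z) => _ /(_ hxy) ->; exact: hyz.
Qed.

Definition Dequiv : equiv_rel G := EquivRel Drel Drel_refl Drel_sym Drel_trans.

Definition Wq := {eq_quot Dequiv}%qT.

Definition Walnut := quotient_topology Wq.

Definition Wmul (x y : Walnut) : Walnut :=
  (\pi_Walnut)%qT (Gmul (repr x) (repr y)).
Definition Winv (x : Walnut) : Walnut := (\pi_Walnut)%qT (Ginv (repr x)).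

End Walnut.

(* Let [N] be the kernel of the rotation part [W -> SO(2)].  Being generated
   by commutators, [N] is preserved by every endomorphism [phi], which thus
   induces an endomorphism [sigma] of [SO(2)] and an additive map [m] of
   [N / Z = R^2] with [m R_k = R_(sigma k) m].  Rotating the unit segment shows
   that [m] is bounded on it, hence linear, and [phi] multiplies the centre
   [Z / D] by [det m]; as [D] is discrete and infinite and [phi] is injective,
   [det m = +-1].  If [sigma] is trivial, the rotation part is constant on
   twisted classes and rotations of distinct angles are pairwise
   non-equivalent.  Otherwise [m] is a reflection, and a covector [l] fixed by
   [m] is, up to a bounded error, preserved or negated along twisted classes
   of [N], so the elements of [N] on which [l] takes the values [n (K + 1)]
   are pairwise non-equivalent. *)

From HB Require Import structures.
From mathcomp Require Import all_boot all_order all_algebra generic_quotient.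
From mathcomp Require Import all_classical all_reals topology normedtype sequences.
From mathcomp Require Import ring lra.
Import Order.TTheory GRing.Theory Num.Theory numFieldNormedType.Exports.

Set Implicit Arguments.
Unset Strict Implicit.
Unset Printing Implicit Defensive.

Local Open Scope ring_scope.

Section Matrix2.
Variable R : realType.
Implicit Types A B : 'M[R]_2.

Lemma ord2P (i : 'I_2) : i = i0 \/ i = i1.
Proof. by case: i => [[|[|//]] Hi]; [left|right]; apply: val_inj. Qed.

Lemma mx2_ext A B : A i0 i0 = B i0 i0 -> A i0 i1 = B i0 i1 ->
  A i1 i0 = B i1 i0 -> A i1 i1 = B i1 i1 -> A = B.
Proof.
move=> e00 e01 e10 e11; apply/matrixP => i j.
by case: (ord2P i) => ->; case: (ord2P j) => ->.
Qed.

Lemma mulmx2E A B i j : (A *m B) i j = A i i0 * B i0 j + A i i1 * B i1 j.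
Proof.
rewrite mxE big_ord_recr big_ord1 /=.
have -> : widen_ord (leqnSn 1) ord0 = i0 by apply: val_inj.
by have -> : (ord_max : 'I_2) = i1 by apply: val_inj.
Qed.

Lemma det2E A : \det A = A i0 i0 * A i1 i1 - A i0 i1 * A i1 i0.
Proof.
rewrite (expand_det_row _ i0) big_ord_recr big_ord1 /= /cofactor !det_mx11 !mxE.
have -> : widen_ord (leqnSn 1) ord0 = i0 by apply: val_inj.
have -> : (ord_max : 'I_2) = i1 by apply: val_inj.
have -> : lift i0 (0 : 'I_1) = i1 by apply: val_inj.
have -> : lift i1 (0 : 'I_1) = i0 by apply: val_inj.
by rewrite /= expr0 expr1 !mul1r mulN1r; ring.
Qed.

End Matrix2.

Section Heisenberg.
Variable R : realType.
Implicit Types (A B : 'M[R]_2) (h k l : Heis R).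

Definition H1 : Heis R := (0, 0, 0).

Lemma Heis_ext h k : ha h = ha k -> hb h = hb k -> hc h = hc k -> h = k.
Proof. by case: h k => [[a b] c] [[a' b'] c']; rewrite /ha /hb /hc /= => -> -> ->. Qed.

Lemma HmulA h k l : Hmul h (Hmul k l) = Hmul (Hmul h k) l.
Proof. by apply: Heis_ext; rewrite /Hmul /ha /hb /hc /=; ring. Qed.

Lemma Hmul1 h : Hmul H1 h = h.
Proof. by apply: Heis_ext; rewrite /Hmul /H1 /ha /hb /hc /=; ring. Qed.

Lemma Hmulr1 h : Hmul h H1 = h.
Proof. by apply: Heis_ext; rewrite /Hmul /H1 /ha /hb /hc /=; ring. Qed.

Lemma HmulV h : Hmul (Hinv h) h = H1.
Proof. by apply: Heis_ext; rewrite /Hmul /Hinv /H1 /ha /hb /hc /=; ring. Qed.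

Lemma HmulrV h : Hmul h (Hinv h) = H1.
Proof. by apply: Heis_ext; rewrite /Hmul /Hinv /H1 /ha /hb /hc /=; ring. Qed.

(* [Hact] is an action of the whole monoid of 2x2 matrices by endomorphisms:
   the correction term [a' b' / 2] absorbs the determinant. *)
Lemma HactM A h k : Hact A (Hmul h k) = Hmul (Hact A h) (Hact A k).
Proof. by apply: Heis_ext; rewrite /Hmul /Hact /ha /hb /hc /= ?det2E; field. Qed.

Lemma Hact_mulmx A B h : Hact A (Hact B h) = Hact (A *m B) h.
Proof. by apply: Heis_ext; rewrite /Hact /ha /hb /hc /= ?det_mulmx ?mulmx2E; ring. Qed.

Lemma Hact1mx h : Hact 1%:M h = h.
Proof. by apply: Heis_ext; rewrite /Hact /ha /hb /hc /= ?det1 !mxE /=; field. Qed.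

Lemma HactH1 A : Hact A H1 = H1.
Proof. by apply: Heis_ext; rewrite /Hact /H1 /ha /hb /hc /=; ring. Qed.

End Heisenberg.

Section SO2Group.
Variable R : realType.
Implicit Types k : SO2 R.

Lemma SO2set1 : SO2set (1%:M : 'M[R]_2).
Proof. by split; rewrite ?trmx1 ?mulmx1 ?det1. Qed.

Definition SO2one : SO2 R := exist (fun M => M \in @SO2set R) _ (mem_set SO2set1).

Lemma SO2mulA : associative (@SO2mul R).
Proof. by move=> k k' k''; apply: val_inj; rewrite /= mulmxA. Qed.

Lemma SO2mul1 : left_id SO2one (@SO2mul R).
Proof. by move=> k; apply: val_inj; rewrite /= mul1mx. Qed.

Lemma SO2mulr1 : right_id SO2one (@SO2mul R).
Proof. by move=> k; apply: val_inj; rewrite /= mulmx1. Qed.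

Lemma SO2mulV : left_inverse SO2one (@SO2inv R) (@SO2mul R).
Proof. by case=> A HA; have /set_mem [AA _] := HA; apply: val_inj. Qed.

Lemma SO2mulrV : right_inverse SO2one (@SO2inv R) (@SO2mul R).
Proof. by case=> A HA; have /set_mem [AA _] := HA; apply: val_inj; rewrite /= mulmx1C. Qed.

End SO2Group.

HB.instance Definition _ (R : realType) := Choice.on (SO2 R).
HB.instance Definition _ (R : realType) :=
  isGroup.Build (SO2 R) (@SO2mulA R) (@SO2mul1 R) (@SO2mulr1 R) (@SO2mulV R)
    (@SO2mulrV R).

Section SO2Coordinates.
Variable R : realType.
Implicit Types k : SO2 R.

Definition rcos k := val k i0 i0.
Definition rsin k := val k i1 i0.

Lemma SO2_entries k :
  [/\ val k i0 i1 = - rsin k, val k i1 i1 = rcos k & rcos k ^+ 2 + rsin k ^+ 2 = 1].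
Proof.
case: k => A HA; have /set_mem [AA dA] := HA; rewrite /rcos /rsin /=.
have entry i j := congr1 (fun M : 'M[R]_2 => M i j) AA.
move: (entry i0 i0) (entry i1 i1) dA; rewrite !mulmx2E !mxE det2E /=.
set a := A i0 i0; set b := A i0 i1; set c := A i1 i0; set d := A i1 i1.
move=> e00 e11 dA.
have /eqP : (d - a) ^+ 2 + (b + c) ^+ 2 = 0.
  have -> : (d - a) ^+ 2 + (b + c) ^+ 2 =
    (a * a + c * c) + (b * b + d * d) - 2 * (a * d - b * c) by ring.
  by rewrite e00 e11 dA; ring.
rewrite paddr_eq0 ?sqr_ge0 // !sqrf_eq0 subr_eq0 addr_eq0 => /andP [/eqP da /eqP bc].
by split; rewrite ?bc ?da //; nra.
Qed.

Lemma rcos2D_rsin2 k : rcos k ^+ 2 + rsin k ^+ 2 = 1.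
Proof. by case: (SO2_entries k). Qed.

Lemma SO2_eq k k' : rcos k = rcos k' -> rsin k = rsin k' -> k = k'.
Proof.
move=> ec es; apply: val_inj.
have [b d _] := SO2_entries k; have [b' d' _] := SO2_entries k'.
by apply: mx2_ext; rewrite // ?b ?b' ?d ?d' ?es ?ec.
Qed.

Definition rotmx (p q : R) : 'M[R]_2 :=
  \matrix_(i, j) (if i == i0 then (if j == i0 then p else - q)
                  else (if j == i0 then q else p)).

Lemma rotmx_SO2 p q : p ^+ 2 + q ^+ 2 = 1 -> SO2set (rotmx p q).
Proof.
by move=> pq; split; [apply: mx2_ext; rewrite !mulmx2E | rewrite det2E];
  rewrite !mxE /=; nra.
Qed.

Definition rotation p q (pq : p ^+ 2 + q ^+ 2 = 1) : SO2 R :=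
  exist (fun M => M \in @SO2set R) _ (mem_set (rotmx_SO2 pq)).

Lemma rcos_rotation p q pq : rcos (@rotation p q pq) = p. Proof. by rewrite /rcos /= mxE. Qed.
Lemma rsin_rotation p q pq : rsin (@rotation p q pq) = q. Proof. by rewrite /rsin /= mxE. Qed.

Lemma sqr_add_sqrt_compl (p : R) : p ^+ 2 <= 1 -> p ^+ 2 + Num.sqrt (1 - p ^+ 2) ^+ 2 = 1.
Proof. by move=> p1; rewrite sqr_sqrtr ?subr_ge0 // addrC subrK. Qed.

Lemma rot90_circle : 0 ^+ 2 + 1 ^+ 2 = 1 :> R.
Proof. by rewrite expr0n expr1n add0r. Qed.

Lemma rot180_circle : (-1) ^+ 2 + 0 ^+ 2 = 1 :> R.
Proof. by rewrite sqrrN expr1n expr0n addr0. Qed.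

Definition rot90 : SO2 R := rotation rot90_circle.
Definition rot180 : SO2 R := rotation rot180_circle.

Lemma rcos1 : rcos 1%g = 1. Proof. by rewrite /rcos /= mxE. Qed.
Lemma rsin1 : rsin 1%g = 0. Proof. by rewrite /rsin /= mxE. Qed.

Lemma val_SO2M k k' : val (k * k')%g = val k *m val k'. Proof. by []. Qed.
Lemma val_SO2V k : val k^-1%g = (val k)^T. Proof. by []. Qed.

Lemma rcosM k k' : rcos (k * k')%g = rcos k * rcos k' - rsin k * rsin k'.
Proof. by rewrite /rcos val_SO2M mulmx2E; have [-> _ _] := SO2_entries k; rewrite /rsin; ring. Qed.

Lemma rsinM k k' : rsin (k * k')%g = rsin k * rcos k' + rcos k * rsin k'.
Proof. by rewrite /rsin val_SO2M mulmx2E; have [_ -> _] := SO2_entries k; rewrite /rcos; ring. Qed.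

Lemma rcosV k : rcos k^-1%g = rcos k. Proof. by rewrite /rcos val_SO2V mxE. Qed.
Lemma rsinV k : rsin k^-1%g = - rsin k.
Proof. by rewrite /rsin val_SO2V mxE; have [] := SO2_entries k. Qed.

Lemma SO2mulC k k' : (k * k' = k' * k)%g.
Proof. by apply: SO2_eq; rewrite ?rcosM ?rsinM; ring. Qed.

Lemma det_SO2 k : \det (val k) = 1.
Proof. by case: k => A HA; have /set_mem [] := HA. Qed.

Lemma Hact_SO2 k h : Hact (val k) h =
  (rcos k * ha h - rsin k * hb h, rsin k * ha h + rcos k * hb h,
   hc h - 2^-1 * ha h * hb h +
   2^-1 * (rcos k * ha h - rsin k * hb h) * (rsin k * ha h + rcos k * hb h)).
Proof.
rewrite /Hact det_SO2; have [-> -> _] := SO2_entries k.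
by rewrite /rcos /rsin; congr (_, _, _); ring.
Qed.

End SO2Coordinates.

Section SemidirectProduct.
Variable R : realType.
Implicit Types (k : SO2 R) (h : Heis R) (x y z : G R).

Definition G1 : G R := (1%g, H1 R).

Lemma val_SO2_1 : val (1%g : SO2 R) = 1%:M. Proof. by []. Qed.

Lemma Hact_SO2VK k h : Hact (val k) (Hact (val k^-1%g) h) = h.
Proof. by rewrite Hact_mulmx -val_SO2M mulgV val_SO2_1 Hact1mx. Qed.

Lemma GmulA : associative (@Gmul R).
Proof.
move=> [k n] [k' n'] [k'' n'']; rewrite /Gmul /=; congr pair; first exact: mulgA.
by rewrite HactM Hact_mulmx HmulA.
Qed.

Lemma Gmul1 : left_id G1 (@Gmul R).
Proof. by move=> [k n]; rewrite /Gmul /= Hact1mx Hmul1; congr pair; exact: mul1g. Qed.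

Lemma Gmulr1 : right_id G1 (@Gmul R).
Proof. by move=> [k n]; rewrite /Gmul /= HactH1 Hmulr1; congr pair; exact: mulg1. Qed.

Lemma GmulV : left_inverse G1 (@Ginv R) (@Gmul R).
Proof.
by move=> [k n]; rewrite /Gmul /Ginv /= -HactM HmulV HactH1; congr pair; exact: mulVg.
Qed.

Lemma GmulrV : right_inverse G1 (@Ginv R) (@Gmul R).
Proof.
by move=> [k n]; rewrite /Gmul /Ginv /= Hact_SO2VK HmulrV; congr pair; exact: mulgV.
Qed.

End SemidirectProduct.

HB.instance Definition _ (R : realType) := Choice.on (G R).
HB.instance Definition _ (R : realType) :=
  isGroup.Build (G R) (@GmulA R) (@Gmul1 R) (@Gmulr1 R) (@GmulV R) (@GmulrV R).

Section GroupCoordinates.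
Variable R : realType.
Implicit Types (k : SO2 R) (h : Heis R) (x y : G R) (d e : R).

Lemma Gmul_pair k h k' h' : (((k, h) : G R) * (k', h'))%g = ((k * k')%g, Hmul h (Hact (val k) h')).
Proof. by []. Qed.

Lemma Ginv_pair k h : (((k, h) : G R)^-1)%g = (k^-1%g, Hact (val k^-1%g) (Hinv h)).
Proof. by []. Qed.

Lemma Hact_SO2_center k d : Hact (val k) (0, 0, d) = (0, 0, d).
Proof. by rewrite Hact_SO2 /ha /hb /hc /=; congr (_, _, _); ring. Qed.

Definition Gz d : G R := (1%g, (0, 0, d)).

Lemma mulg_Gz x d : (x * Gz d)%g = (x.1, (ha x.2, hb x.2, hc x.2 + d)).
Proof.
case: x => k h; rewrite Gmul_pair Hact_SO2_center mulg1; congr pair.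
by rewrite /Hmul /ha /hb /hc /=; congr (_, _, _); ring.
Qed.

Lemma Gz_central d x : (Gz d * x = x * Gz d)%g.
Proof.
case: x => k h; rewrite mulg_Gz Gmul_pair Hact1mx mul1g; congr pair.
by rewrite /Hmul /ha /hb /hc /=; congr (_, _, _); ring.
Qed.

Lemma GzD d e : (Gz d * Gz e)%g = Gz (d + e).
Proof. by rewrite mulg_Gz. Qed.

Lemma GzV d : ((Gz d)^-1)%g = Gz (- d).
Proof. by apply: mulg1_eq; rewrite GzD subrr. Qed.

End GroupCoordinates.

Section WalnutGroup.
Variables (R : realType) (D : Zsubgroup R).
Implicit Types (x y : G R) (d e : R).
Local Notation W := (Walnut D).

Lemma zcarrierN d : zcarrier D d -> zcarrier D (- d).
Proof. by move=> Dd; rewrite -sub0r; apply: zsubB => //; exact: zsub0. Qed.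

Lemma zcarrierD d e : zcarrier D d -> zcarrier D e -> zcarrier D (d + e).
Proof. by move=> Dd De; rewrite -[e]opprK; apply: zsubB => //; exact: zcarrierN. Qed.

Lemma Drel_propE x y : Drel_prop D x y <-> exists2 d, zcarrier D d & y = (x * Gz d)%g.
Proof.
rewrite /Drel_prop; split=> [[e1 e2 e3 e4]|[d Dd ->]].
  exists (hc y.2 - hc x.2) => //; rewrite mulg_Gz addrC subrK.
  by case: y e1 e2 e3 e4 => k [[a b] c] /= -> -> -> _.
by rewrite mulg_Gz /ha /hb /hc /=; split=> //; rewrite addrC addKr.
Qed.

Lemma Drel_propM x x' y y' : Drel_prop D x x' -> Drel_prop D y y' ->
  Drel_prop D (x * y)%g (x' * y')%g.
Proof.
move=> /Drel_propE [d Dd ->] /Drel_propE [e De ->].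
apply/Drel_propE; exists (d + e); first exact: zcarrierD.
by rewrite -GzD mulgA -(mulgA x) (Gz_central d y) !mulgA.
Qed.

Lemma Drel_propV x x' : Drel_prop D x x' -> Drel_prop D x^-1%g x'^-1%g.
Proof.
move=> /Drel_propE [d Dd ->]; apply/Drel_propE; exists (- d); first exact: zcarrierN.
by rewrite invgM GzV Gz_central.
Qed.

Definition piW : G R -> W := \pi_W%qT.

Lemma piW_eq x y : piW x = piW y <-> Drel_prop D x y.
Proof. by split=> [/eqmodP/asboolP | ?]; last by apply/eqmodP/asboolP. Qed.

Lemma piW_repr (w : W) : piW (repr w) = w.
Proof. exact: reprK. Qed.

Lemma Drel_prop_repr x : Drel_prop D (repr (piW x)) x.
Proof. by apply/piW_eq; rewrite piW_repr. Qed.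

Lemma Wind (P : W -> Prop) : (forall x, P (piW x)) -> forall w, P w.
Proof. by move=> Ppi w; rewrite -(piW_repr w). Qed.

Lemma Wmul_pi x y : Wmul (piW x) (piW y) = piW (x * y)%g.
Proof. by apply/piW_eq; apply: Drel_propM; apply: Drel_prop_repr. Qed.

Lemma Winv_pi x : Winv (piW x) = piW x^-1%g.
Proof. by apply/piW_eq; apply: Drel_propV; apply: Drel_prop_repr. Qed.

Definition W1 : W := piW 1%g.

Lemma WmulA : associative (@Wmul R D).
Proof.
by elim/Wind=> x; elim/Wind=> y; elim/Wind=> z; rewrite !Wmul_pi mulgA.
Qed.

Lemma Wmul1 : left_id W1 (@Wmul R D).
Proof. by elim/Wind=> x; rewrite Wmul_pi mul1g. Qed.

Lemma Wmulr1 : right_id W1 (@Wmul R D).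
Proof. by elim/Wind=> x; rewrite Wmul_pi mulg1. Qed.

Lemma WmulV : left_inverse W1 (@Winv R D) (@Wmul R D).
Proof. by elim/Wind=> x; rewrite Winv_pi Wmul_pi mulVg. Qed.

Lemma WmulrV : right_inverse W1 (@Winv R D) (@Wmul R D).
Proof. by elim/Wind=> x; rewrite Winv_pi Wmul_pi mulgV. Qed.

End WalnutGroup.

HB.instance Definition _ (R : realType) (D : Zsubgroup R) := Choice.on (Walnut D).
HB.instance Definition _ (R : realType) (D : Zsubgroup R) :=
  isGroup.Build (Walnut D) (@WmulA R D) (@Wmul1 R D) (@Wmulr1 R D) (@WmulV R D)
    (@WmulrV R D).

Section WalnutProjection.
Variables (R : realType) (D : Zsubgroup R).
Local Open Scope group_scope.

Lemma piWM : {morph @piW R D : x y / x * y}.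
Proof. by move=> x y; rewrite -Wmul_pi. Qed.

Lemma piWV : {morph @piW R D : x / x^-1}.
Proof. by move=> x; rewrite -Winv_pi. Qed.

Lemma piW1 : piW D 1 = 1.
Proof. by []. Qed.

End WalnutProjection.

Arguments piWM {R D}.
Arguments piWV {R D}.
Arguments piW1 {R D}.

Section GroupMorphism.
Local Open Scope group_scope.
Variables (aT rT : groupType) (f : aT -> rT).
Hypothesis fM : {morph f : x y / x * y}.

Lemma morph1 : f 1 = 1.
Proof. by apply: (mulgI (f 1)); rewrite -fM !mulg1. Qed.

Lemma morphV : {morph f : x / x^-1}.
Proof. by move=> x; apply/esym/mulg1_eq; rewrite -fM mulgV morph1. Qed.

Lemma morphR : {morph f : x y / [~ x, y]}.
Proof. by move=> x y; rewrite /commg /conjg !fM !morphV. Qed.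

End GroupMorphism.

Section HeisenbergInG.
Variable R : realType.
Implicit Types (h : Heis R) (k : SO2 R) (x : G R).
Local Open Scope group_scope.

Definition GH h : G R := (1, h).
Definition GK k : G R := (k, H1 R).

Lemma GH_mul h h' : GH h * GH h' = GH (Hmul h h').
Proof. by rewrite Gmul_pair Hact1mx mulg1. Qed.

Lemma GH_inv h : (GH h)^-1 = GH (Hinv h).
Proof. by apply: mulg1_eq; rewrite GH_mul HmulrV. Qed.

Lemma GH_GK x : x = GH x.2 * GK x.1.
Proof. by case: x => k n; rewrite Gmul_pair Hact1mx Hmulr1 mul1g. Qed.

Lemma GH_conj k n h :
  ((k, n) : G R) * GH h * ((k, n) : G R)^-1 = GH (Hmul (Hmul n (Hact (val k) h)) (Hinv n)).
Proof. by rewrite /GH Ginv_pair (Gmul_pair k n) Gmul_pair mulg1 Hact_SO2VK mulgV. Qed.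

End HeisenbergInG.

Section WalnutCoordinates.
Variables (R : realType) (D : Zsubgroup R).
Local Notation W := (Walnut D).
Local Notation piW := (piW D).
Implicit Types (a b : W) (x : G R) (h : Heis R) (k : SO2 R) (u v c : R).

Definition wrot a : SO2 R := (repr a).1.
Definition wa a : R := ha (repr a).2.
Definition wb a : R := hb (repr a).2.

Lemma wrot_pi x : wrot (piW x) = x.1.
Proof. by case: (Drel_prop_repr D x). Qed.
Lemma wa_pi x : wa (piW x) = ha x.2.
Proof. by case: (Drel_prop_repr D x). Qed.
Lemma wb_pi x : wb (piW x) = hb x.2.
Proof. by case: (Drel_prop_repr D x). Qed.

Local Open Scope group_scope.

Lemma wrotM : {morph wrot : a b / a * b}.
Proof. by elim/Wind=> x; elim/Wind=> y; rewrite -piWM !wrot_pi. Qed.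

Lemma wrot_commg a b : wrot [~ a, b] = 1.
Proof. by rewrite (morphR wrotM); apply/eqP/commgP/SO2mulC. Qed.

Lemma waM a b :
  wa (a * b) = (wa a + (rcos (wrot a) * wa b - rsin (wrot a) * wb b))%R.
Proof.
elim/Wind: a => -[k n]; elim/Wind: b => -[k' n'].
by rewrite -piWM Gmul_pair !wa_pi !wb_pi wrot_pi Hact_SO2.
Qed.

Lemma wbM a b :
  wb (a * b) = (wb a + (rsin (wrot a) * wa b + rcos (wrot a) * wb b))%R.
Proof.
elim/Wind: a => -[k n]; elim/Wind: b => -[k' n'].
by rewrite -piWM Gmul_pair !wa_pi !wb_pi wrot_pi Hact_SO2.
Qed.

Section Kernel.
Variable a : W.
Hypothesis a1 : wrot a = 1.

Lemma waMN b : wa (a * b) = (wa a + wa b)%R.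
Proof. by rewrite waM a1 rcos1 rsin1 mul1r mul0r subr0. Qed.

Lemma wbMN b : wb (a * b) = (wb a + wb b)%R.
Proof. by rewrite wbM a1 rcos1 rsin1 mul1r mul0r add0r. Qed.

Lemma waVN : wa a^-1 = (- wa a)%R.
Proof. by apply/eqP; rewrite -addr_eq0 addrC -waMN mulgV wa_pi. Qed.

Lemma wbVN : wb a^-1 = (- wb a)%R.
Proof. by apply/eqP; rewrite -addr_eq0 addrC -wbMN mulgV wb_pi. Qed.

Lemma N_pi : a = piW (GH (repr a).2).
Proof.
rewrite -{1}(piW_repr a) {1}(GH_GK (repr a)); congr piW.
by rewrite -[(repr a).1]/(wrot a) a1 mulg1.
Qed.

End Kernel.

Definition embH u v : W := piW (GH (u, v, 0)).
Definition embZ c : W := piW (GH (0, 0, c)).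
Definition embK k : W := piW (GK k).

Lemma wrot_embH u v : wrot (embH u v) = 1. Proof. exact: wrot_pi. Qed.
Lemma wa_embH u v : wa (embH u v) = u. Proof. exact: wa_pi. Qed.
Lemma wb_embH u v : wb (embH u v) = v. Proof. exact: wb_pi. Qed.
Lemma wa_embZ c : wa (embZ c) = 0%R. Proof. exact: wa_pi. Qed.
Lemma wb_embZ c : wb (embZ c) = 0%R. Proof. exact: wb_pi. Qed.
Lemma wrot_embK k : wrot (embK k) = k. Proof. exact: wrot_pi. Qed.

Lemma embH00 : embH 0 0 = 1. Proof. by []. Qed.

Lemma embH_mul u v u' v' :
  embH u v * embH u' v' = embH (u + u') (v + v') * embZ (u * v').
Proof.
rewrite -!piWM !GH_mul; congr (piW (GH _)).
by apply: Heis_ext; rewrite /Hmul /ha /hb /hc /=; ring.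
Qed.

Lemma N_embHZ a : wrot a = 1 -> exists c, a = embH (wa a) (wb a) * embZ c.
Proof.
move=> a1; exists (hc (repr a).2); rewrite {1}(N_pi a1) -piWM GH_mul.
by congr (piW (GH _)); apply: Heis_ext; rewrite /wa /wb /Hmul /ha /hb /hc /=; ring.
Qed.

Lemma commgN a b : wrot a = 1 -> wrot b = 1 ->
  [~ a, b] = embZ (wa a * wb b - wa b * wb a)%R.
Proof.
move=> /N_pi -> /N_pi ->; rewrite -(morphR piWM) !wa_pi !wb_pi /commg /conjg.
rewrite !GH_inv !GH_mul; congr (piW (GH _)).
by apply: Heis_ext; rewrite /Hmul /Hinv /ha /hb /hc /=; ring.
Qed.

Lemma embZ_commg c : embZ c = [~ embH c 0, embH 0 1].
Proof. by rewrite commgN ?wrot_embH // !wa_embH !wb_embH mulr1 mul0r subr0. Qed.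

Lemma embZ_eq1 c : embZ c = 1 <-> zcarrier D c.
Proof.
rewrite -piW1 piW_eq /Drel_prop /=; split=> [[_ _ _]|Dc]; last first.
  by split=> //; rewrite /hc /= sub0r; apply: zcarrierN.
by rewrite /hc /= sub0r => /zcarrierN; rewrite opprK.
Qed.

Lemma wconjN a b : wrot b = 1 ->
  [/\ wrot (a * b * a^-1) = 1,
      wa (a * b * a^-1) = (rcos (wrot a) * wa b - rsin (wrot a) * wb b)%R &
      wb (a * b * a^-1) = (rsin (wrot a) * wa b + rcos (wrot a) * wb b)%R].
Proof.
move=> /N_pi ->; elim/Wind: a => -[k n].
rewrite -piWV -!piWM GH_conj !wrot_pi !wa_pi !wb_pi /= Hact_SO2.
by split=> //; rewrite /Hmul /Hinv /ha /hb /=; ring.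
Qed.

End WalnutCoordinates.

Section KernelGeneration.
Variables (R : realType) (D : Zsubgroup R).
Local Notation W := (Walnut D).
Implicit Types (a : W) (u v : R).

Local Open Scope group_scope.

Lemma commg_rot90 u v : let t := [~ embK D (rot90 R), embH D u v] in
  [/\ wrot t = 1, wa t = (u - v)%R & wb t = (u + v)%R].
Proof.
rewrite /=; set x := embK D (rot90 R); set y := embH D u v.
have y1 : wrot y = 1 by exact: wrot_embH.
have yV1 : wrot y^-1 = 1 by rewrite (morphV (@wrotM _ D)) y1 invg1.
have [c1 ca cb] := wconjN x^-1 yV1.
have -> : [~ x, y] = x^-1 * y^-1 * x^-1^-1 * y by rewrite invgK /commg /conjg !mulgA.
rewrite wrotM c1 mul1g waMN // wbMN // ca cb (morphV (@wrotM _ D)) wrot_embK.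
rewrite rcosV rsinV rcos_rotation rsin_rotation waVN // wbVN // wa_embH wb_embH.
by split=> //; ring.
Qed.

Lemma N_commg2 a : wrot a = 1 -> exists x1 y1 x2 y2 : W, a = [~ x1, y1] * [~ x2, y2].
Proof.
move=> a1; set s := wa a; set t := wb a.
set c := [~ embK D (rot90 R), embH D ((s + t) / 2) ((t - s) / 2)].
have [c1 ca cb] : [/\ wrot c = 1, wa c = s & wb c = t].
  by case: (commg_rot90 ((s + t) / 2) ((t - s) / 2)) => -> -> ->; split=> //; field.
have z1 : wrot (a * c^-1) = 1 by rewrite wrotM (morphV (@wrotM _ D)) a1 c1 mul1g invg1.
have [d ed] := N_embHZ z1.
rewrite waMN // wbMN // waVN // wbVN // ca cb !subrr embH00 mul1g in ed.
exists (embH D d 0), (embH D 0 1), (embK D (rot90 R)), (embH D ((s + t) / 2) ((t - s) / 2)).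
by rewrite -embZ_commg -ed mulgVK.
Qed.

End KernelGeneration.

Section InducedLinearMap.
Variables (R : realType) (D : Zsubgroup R).
Local Notation W := (Walnut D).
Variable phi : W -> W.
Hypothesis phiM : {morph phi : x y / (x * y)%g}.
Implicit Types (a : W) (k : SO2 R) (u v c : R).

Lemma wrot_phiN a : wrot a = 1%g -> wrot (phi a) = 1%g.
Proof.
move=> /N_commg2 [x1 [y1 [x2 [y2 ->]]]].
by rewrite phiM !(morphR phiM) wrotM !wrot_commg mulg1.
Qed.

Definition sigma k := wrot (phi (embK D k)).

Lemma wrot_phi a : wrot (phi a) = sigma (wrot a).
Proof.
have n1 : wrot (a * (embK D (wrot a))^-1)%g = 1%g.
  by rewrite wrotM (morphV (@wrotM _ D)) wrot_embK mulgV.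
by rewrite -{1}(mulgVK (embK D (wrot a)) a) phiM wrotM wrot_phiN // mul1g.
Qed.

(* [(phia u v, phib u v)] is the image of [(u, v)] under the map induced by
   [phi] on [N / Z = R^2]. *)
Definition phia u v := wa (phi (embH D u v)).
Definition phib u v := wb (phi (embH D u v)).

Lemma wrot_phi_embH u v : wrot (phi (embH D u v)) = 1%g.
Proof. exact/wrot_phiN/wrot_embH. Qed.

Lemma phi_embZ c :
  phi (embZ D c) = embZ D (phia c 0 * phib 0 1 - phia 0 1 * phib c 0).
Proof. by rewrite embZ_commg (morphR phiM) commgN ?wrot_phi_embH. Qed.

Lemma phi_N a : wrot a = 1%g ->
  wa (phi a) = phia (wa a) (wb a) /\ wb (phi a) = phib (wa a) (wb a).
Proof.
move=> /N_embHZ [c ea]; rewrite [in LHS]ea [in X in _ /\ X = _]ea phiM phi_embZ.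
by rewrite waMN ?wbMN ?wrot_phi_embH // wa_embZ wb_embZ !addr0.
Qed.

Lemma phiaD u v u' v' : phia (u + u') (v + v') = phia u v + phia u' v'.
Proof.
have := congr1 (fun w => wa (phi w)) (embH_mul D u v u' v').
by rewrite /= !phiM phi_embZ !waMN ?wrot_phi_embH // wa_embZ addr0.
Qed.

Lemma phibD u v u' v' : phib (u + u') (v + v') = phib u v + phib u' v'.
Proof.
have := congr1 (fun w => wb (phi w)) (embH_mul D u v u' v').
by rewrite /= !phiM phi_embZ !wbMN ?wrot_phi_embH // wb_embZ addr0.
Qed.

Lemma phi_rot k u v :
  phia (rcos k * u - rsin k * v) (rsin k * u + rcos k * v) =
    rcos (sigma k) * phia u v - rsin (sigma k) * phib u v /\
  phib (rcos k * u - rsin k * v) (rsin k * u + rcos k * v) =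
    rsin (sigma k) * phia u v + rcos (sigma k) * phib u v.
Proof.
have [n1 na nb] := wconjN (embK D k) (wrot_embH D u v).
have [_ pa pb] := wconjN (phi (embK D k)) (wrot_phi_embH u v).
have [qa qb] := phi_N n1.
rewrite wrot_embK wa_embH wb_embH in na nb.
by rewrite -na -nb -qa -qb !phiM (morphV phiM) pa pb.
Qed.

End InducedLinearMap.

Section AdditiveFunctions.
Variable R : realType.
Variable f : R -> R.
Hypothesis fD : forall a b, f (a + b) = f a + f b.

Lemma additive0 : f 0 = 0.
Proof. by apply: (addrI (f 0)); rewrite -fD !addr0. Qed.

Lemma additiveN a : f (- a) = - f a.
Proof. by apply/eqP; rewrite -addr_eq0 -fD addNr additive0. Qed.

Lemma additive_mulrz (z : int) a : f (z%:~R * a) = z%:~R * f a.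
Proof.
have fn (n : nat) : f (n%:R * a) = n%:R * f a.
  by elim: n => [|n IHn]; rewrite ?mul0r ?additive0 // -addn1 natrD !mulrDl !mul1r fD IHn.
case: z => n; first exact: fn.
by rewrite NegzE mulrNz !mulNr additiveN fn.
Qed.

End AdditiveFunctions.

Section RealLemmas.
Variable R : realType.

(* The defect [g t = f t - t f 1] is additive, vanishes on the integers and
   is bounded; so [n g t = g (n t)] stays bounded for all [n], forcing [g t = 0]. *)
Lemma additive_bounded_linear (f : R -> R) (K : R) :
  (forall a b, f (a + b) = f a + f b) ->
  (forall r, 0 <= r <= 1 -> `|f r| <= K) -> forall t, f t = t * f 1.
Proof.
move=> fD fK t; apply/eqP; rewrite -subr_eq0; apply/eqP.
pose g r := f r - r * f 1.
have gD a b : g (a + b) = g a + g b by rewrite /g fD mulrDl opprD addrACA.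
have gZ (z : int) : g z%:~R = 0.
  by rewrite -[z%:~R]mulr1 (additive_mulrz gD) /g mul1r subrr mulr0.
have gK (n : nat) : `|n%:R * g t| <= K + `|f 1|.
  rewrite -(additive_mulrz gD n) -[_ * t](subrK (Num.floor (n%:R * t))%:~R) gD gZ addr0.
  have /andP [fl1 fl2] := floor_itv (n%:R * t : R).
  rewrite intrD in fl2.
  have r01 : 0 <= n%:R * t - (Num.floor (n%:R * t))%:~R <= 1 by apply/andP; lra.
  apply: le_trans (ler_normB _ _) _; apply: lerD; first exact: fK.
  by rewrite normrM ger0_norm ?(andP r01).1 // ler_piMl // (andP r01).2.
apply/eqP; apply: contraT => gt_neq0.
have [n Kn] : exists n : nat, (K + `|f 1|) / `|g t| < n%:R.
  by exists (Num.Def.archi_bound ((K + `|f 1|) / `|g t|)); apply: archi_boundP;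
    rewrite divr_ge0 // (le_trans _ (gK 0%N)).
move: Kn; rewrite ltr_pdivrMr ?normr_gt0 // => Kn.
have := gK n; rewrite normrM ger0_norm // => nK.
by move: (lt_le_trans Kn nK); rewrite ltxx.
Qed.

Lemma discrete_stable_norm1 (S : set R) (c d : R) :
  discrete_subset S -> S 0 -> S d -> d != 0 ->
  (forall x, S x -> S (c * x)) -> (forall x, S (c * x) -> S x) -> `|c| = 1.
Proof.
move=> Sdisc S0 Sd d0 Sc Sc'.
have [e e0 Se] := Sdisc 0 S0.
(* A multiplier of norm < 1 keeping [S] invariant would push [d] into the
   isolating ball around 0. *)
have small r : `|r| < 1 -> (forall x, S x -> S (r * x)) -> r = 0.
  move=> r1 Sr; have Srn (n : nat) : S (r ^+ n * d).
    by elim: n => [|n IHn]; rewrite ?expr0 ?mul1r // exprS -mulrA; apply: Sr.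
  have ed : 0 < e / `|d| by rewrite divr_gt0 ?normr_gt0.
  have [N _ rN] := cvgr0_norm_lt _ (cvg_expr r1) _ ed.
  have := Se _ (Srn N.+1); rewrite subr0 normrM -ltr_pdivlMr ?normr_gt0 //.
  move=> /(_ (rN _ (leqnSn N))) /eqP; rewrite mulf_eq0 (negPf d0) orbF expf_eq0 /=.
  by move/eqP.
have c0 : c != 0.
  apply/eqP => c0; have Se2 : S (e / 2) by apply: Sc'; rewrite c0 mul0r.
  have /eqP := Se _ Se2 (ltac:(rewrite subr0 ger0_norm; lra)).
  by rewrite gt_eqF // divr_gt0.
case: (ltgtP `|c| 1) => // c1; first by move: c0; rewrite (small c c1 Sc) eqxx.
have /eqP : c^-1 = 0.
  apply: small; first by rewrite normrV ?unitfE // invf_lt1 // (lt_trans ltr01).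
  by move=> x Sx; apply: Sc'; rewrite mulrA mulfV // mul1r.
by rewrite invr_eq0 (negPf c0).
Qed.

End RealLemmas.

Section TwistedConjugacy.
Local Open Scope group_scope.
Variables (G : groupType) (phi : G -> G).
Hypothesis phi1 : phi 1 = 1.

Lemma Reidemeister_infinite_family (F : nat -> G) :
  (forall n m, twisted_conj *%g (fun x => x^-1) phi (F n) (F m) -> n = m) ->
  Reidemeister_infinite *%g (fun x => x^-1) phi.
Proof.
move=> Fsep fin.
pose cls n := [set y | twisted_conj *%g (fun x => x^-1) phi (F n) y]%classic.
have cls_inj : injective cls.
  move=> n m e; apply: Fsep; have : cls m (F m) by exists 1; rewrite phi1 invg1 mul1g mulg1.
  by rewrite -e.
have := finite_preimage (in2W cls_inj) fin.
have -> : (cls @^-1` twisted_classes *%g (fun x => x^-1) phi)%classic = setT.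
  by apply/seteqP; split => // n _; exists (F n).
exact: infinite_nat.
Qed.

End TwistedConjugacy.

Section RotationBounds.
Variable R : realType.
Implicit Types (k : SO2 R) (x y : R).

Lemma norm_rcos_le1 k : `|rcos k| <= 1.
Proof. by have := rcos2D_rsin2 k; rewrite ler_norml => e; apply/andP; split; nra. Qed.

Lemma norm_rsin_le1 k : `|rsin k| <= 1.
Proof. by have := rcos2D_rsin2 k; rewrite ler_norml => e; apply/andP; split; nra. Qed.

Lemma norm_rotx_le k x y : `|rcos k * x - rsin k * y| <= `|x| + `|y|.
Proof.
apply: le_trans (ler_normB _ _) _; rewrite !normrM.
by apply: lerD; apply: ler_piMl; rewrite ?normr_ge0 ?norm_rcos_le1 ?norm_rsin_le1.
Qed.

Lemma norm_roty_le k x y : `|rsin k * x + rcos k * y| <= `|x| + `|y|.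
Proof.
apply: le_trans (ler_normD _ _) _; rewrite !normrM.
by apply: lerD; apply: ler_piMl; rewrite ?normr_ge0 ?norm_rcos_le1 ?norm_rsin_le1.
Qed.

End RotationBounds.

Section LinearPart.
Variables (R : realType) (D : Zsubgroup R).
Variable phi : Walnut D -> Walnut D.
Hypothesis phiM : {morph phi : x y / (x * y)%g}.
Local Notation phia := (phia phi).
Local Notation phib := (phib phi).
Local Notation sigma := (sigma phi).
Implicit Types (r u v : R) (k : SO2 R).

(* [(r, 0)] is the sum of the rotations of [(1, 0)] with cosine [r/2] and
   sines [s] and [-s]. *)
Lemma phi_bounded r : 0 <= r <= 1 ->
  `|phia r 0| <= 2 * (`|phia 1 0| + `|phib 1 0|) /\
  `|phib r 0| <= 2 * (`|phia 1 0| + `|phib 1 0|).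
Proof.
move=> /andP [r0 r1]; have r2 : (r / 2) ^+ 2 <= 1 by nra.
have s2 := sqr_add_sqrt_compl r2; set s := Num.sqrt _ in s2.
have s2' : (r / 2) ^+ 2 + (- s) ^+ 2 = 1 by rewrite sqrrN.
have [a1 b1] := phi_rot phiM (rotation s2) 1 0.
have [a2 b2] := phi_rot phiM (rotation s2') 1 0.
rewrite !rcos_rotation !rsin_rotation !mulr1 !mulr0 !subr0 !addr0 in a1 b1 a2 b2.
have -> : phia r 0 = phia (r / 2) s + phia (r / 2) (- s).
  by rewrite -phiaD //; congr phia; [field | rewrite subrr].
have -> : phib r 0 = phib (r / 2) s + phib (r / 2) (- s).
  by rewrite -phibD //; congr phib; [field | rewrite subrr].
rewrite a1 b1 a2 b2; move: (sigma _) (sigma _) => k1 k2.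
rewrite mulr_natl mulr2n.
by split; apply: le_trans (ler_normD _ _) _; apply: lerD;
  rewrite ?norm_rotx_le ?norm_roty_le.
Qed.

Lemma phia_r0 r : phia r 0 = r * phia 1 0.
Proof.
apply: (additive_bounded_linear (f := fun r => phia r 0)) => [a b|t t01].
  by rewrite -phiaD // addr0.
exact: (phi_bounded t01).1.
Qed.

Lemma phib_r0 r : phib r 0 = r * phib 1 0.
Proof.
apply: (additive_bounded_linear (f := fun r => phib r 0)) => [a b|t t01].
  by rewrite -phibD // addr0.
exact: (phi_bounded t01).2.
Qed.

Lemma phi_0v v : phia 0 v = v * phia 0 1 /\ phib 0 v = v * phib 0 1.
Proof.
have [a1 b1] := phi_rot phiM (rot90 R) v 0.
have [a2 b2] := phi_rot phiM (rot90 R) 1 0.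
rewrite /rot90 !rcos_rotation !rsin_rotation !mul0r !mulr0 !mul1r !subr0 !addr0
  in a1 b1 a2 b2.
by rewrite a1 b1 a2 b2 phia_r0 phib_r0; split; ring.
Qed.

Lemma phia_linear u v : phia u v = u * phia 1 0 + v * phia 0 1.
Proof.
have -> : phia u v = phia (u + 0) (0 + v) by rewrite addr0 add0r.
by rewrite phiaD // phia_r0 (phi_0v v).1.
Qed.

Lemma phib_linear u v : phib u v = u * phib 1 0 + v * phib 0 1.
Proof.
have -> : phib u v = phib (u + 0) (0 + v) by rewrite addr0 add0r.
by rewrite phibD // phib_r0 (phi_0v v).2.
Qed.

Definition phidet := phia 1 0 * phib 0 1 - phia 0 1 * phib 1 0.

Lemma phi_embZ_det c : phi (embZ D c) = embZ D (phidet * c).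
Proof. by rewrite phi_embZ // phia_r0 phib_r0 /phidet; congr embZ; ring. Qed.

Lemma norm_phidet : discrete_subset (zcarrier D) -> infinite_set (zcarrier D) ->
  injective phi -> `|phidet| = 1.
Proof.
move=> Ddisc Dinf phi_inj.
have [d Dd d0] : exists2 d, zcarrier D d & d != 0.
  apply: contrapT => noD; apply: Dinf; apply: (sub_finite_set _ (finite_set1 0)).
  by move=> d Dd; apply: contrapT => d0; apply: noD; exists d => //; apply/eqP.
apply: (discrete_stable_norm1 Ddisc (zsub0 D) Dd d0) => c.
  by move=> /embZ_eq1 c1; apply/embZ_eq1; rewrite -phi_embZ_det c1 (morph1 phiM).
move=> /embZ_eq1 c1; apply/embZ_eq1; apply: phi_inj.
by rewrite phi_embZ_det c1 (morph1 phiM).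
Qed.

Lemma phi_rot_basis k :
  [/\ rcos k * phia 1 0 + rsin k * phia 0 1 =
        rcos (sigma k) * phia 1 0 - rsin (sigma k) * phib 1 0,
      rcos k * phib 1 0 + rsin k * phib 0 1 =
        rsin (sigma k) * phia 1 0 + rcos (sigma k) * phib 1 0,
      - rsin k * phia 1 0 + rcos k * phia 0 1 =
        rcos (sigma k) * phia 0 1 - rsin (sigma k) * phib 0 1 &
      - rsin k * phib 1 0 + rcos k * phib 0 1 =
        rsin (sigma k) * phia 0 1 + rcos (sigma k) * phib 0 1].
Proof.
have [a1 b1] := phi_rot phiM k 1 0.
have [a2 b2] := phi_rot phiM k 0 1.
rewrite !mulr1 !mulr0 !subr0 !addr0 !sub0r !add0r in a1 b1 a2 b2.
rewrite (phia_linear (rcos k)) (phib_linear (rcos k)) in a1 b1.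
by rewrite (phia_linear (- rsin k)) (phib_linear (- rsin k)) in a2 b2.
Qed.

End LinearPart.

Section PlaneAlgebra.
Variable R : realType.

(* [M R = R' M] for two distinct rotations [R], [R'] forces [M] to be of the
   form [[x, z], [z, -x]]. *)
Lemma intertwine_rotations (p q p' q' x y z w : R) : (p, q) != (p', q') ->
  p * x + q * y = p' * x - q' * z -> p * z + q * w = q' * x + p' * z ->
  - q * x + p * y = p' * y - q' * w -> - q * z + p * w = q' * y + p' * w ->
  w = - x /\ y = z.
Proof.
move=> pq E1 E2 E3 E4; set dp := p - p'; set dq := q - q'.
have c1 : dp * (x + w) - dq * (z - y) = 0 by rewrite /dp /dq; lra.
have c2 : dp * (z - y) + dq * (x + w) = 0 by rewrite /dp /dq; lra.
have S0 : dp ^+ 2 + dq ^+ 2 != 0.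
  apply: contraNneq pq => /eqP; rewrite paddr_eq0 ?sqr_ge0 // !sqrf_eq0 !subr_eq0.
  by case/andP=> /eqP -> /eqP ->.
have /eqP : (dp ^+ 2 + dq ^+ 2) * (x + w) = 0.
  have -> : (dp ^+ 2 + dq ^+ 2) * (x + w) =
    dp * (dp * (x + w) - dq * (z - y)) + dq * (dp * (z - y) + dq * (x + w)) by ring.
  by rewrite c1 c2 !mulr0 addr0.
have /eqP : (dp ^+ 2 + dq ^+ 2) * (z - y) = 0.
  have -> : (dp ^+ 2 + dq ^+ 2) * (z - y) =
    dp * (dp * (z - y) + dq * (x + w)) - dq * (dp * (x + w) - dq * (z - y)) by ring.
  by rewrite c1 c2 !mulr0 subr0.
rewrite !mulf_eq0 (negPf S0) /= subr_eq0 addr_eq0 => /eqP <- /eqP ->.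
by rewrite opprK.
Qed.

Lemma reflection_fixed_vector (x z : R) : x ^+ 2 + z ^+ 2 = 1 ->
  exists l1 l2 : R, [/\ 0 < l1 ^+ 2 + l2 ^+ 2, l1 * x + l2 * z = l1 &
                        l1 * z - l2 * x = l2].
Proof.
move=> xz1; have [e|ne] := eqVneq ((1 + x) ^+ 2 + z ^+ 2) 0.
  move: e => /eqP; rewrite paddr_eq0 ?sqr_ge0 // !sqrf_eq0 => /andP [/eqP x1 /eqP z0].
  exists 0, 1; rewrite z0; split; lra.
by exists (1 + x), z; rewrite lt_def ne addr_ge0 ?sqr_ge0 //; split; nra.
Qed.

Lemma nat_separated (K a b : R) (n m : nat) : `|a| <= K -> `|b| <= K ->
  m%:R * (K + 1) = n%:R * (K + 1) + a \/ m%:R * (K + 1) = - (n%:R * (K + 1)) + b ->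
  n = m.
Proof.
rewrite !ler_norml => /andP [a1 a2] /andP [b1 b2] [] e.
  case: (ltngtP n m) => // nm; exfalso.
    have : n%:R + 1 <= m%:R :> R by rewrite natr1 ler_nat.
    nra.
  have : m%:R + 1 <= n%:R :> R by rewrite natr1 ler_nat.
  nra.
have K0 : 0 <= K by lra.
have mn : (m + n)%:R * (K + 1) <= K by rewrite natrD mulrDl; lra.
have : (m + n)%:R < 1 :> R by nra.
by rewrite ltrn1 ltnS leqn0 addn_eq0 => /andP [/eqP -> /eqP ->].
Qed.

End PlaneAlgebra.

Section TwistedClasses.
Variables (R : realType) (D : Zsubgroup R) (phi : Walnut D -> Walnut D).
Hypothesis phiM : {morph phi : x y / (x * y)%g}.
Local Notation sigma := (sigma phi).

Lemma wrot_twisted g a :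
  wrot (g * a * (phi g)^-1)%g = (wrot g * wrot a * (sigma (wrot g))^-1)%g.
Proof. by rewrite !wrotM (morphV (@wrotM _ D)) wrot_phi. Qed.

Lemma Reidemeister_sigma_id : (forall k, sigma k = k) ->
  Reidemeister_infinite *%g (fun x => x^-1)%g phi.
Proof.
move=> sigma_id.
have c2 (n : nat) : (n.+1%:R^-1 : R) ^+ 2 <= 1.
  by rewrite expr_le1 ?invr_ge0 // invf_le1 // ler1n.
pose F n := embK D (rotation (sqr_add_sqrt_compl (c2 n))).
apply: (Reidemeister_infinite_family (morph1 phiM) (F := F)) => n m [g e].
have := congr1 (fun w => rcos (wrot w)) e.
rewrite /= wrot_twisted sigma_id (SO2mulC (wrot g)) mulgK !wrot_embK !rcos_rotation.
by move/invr_inj/eqP; rewrite eqr_nat eqSS => /eqP.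
Qed.

End TwistedClasses.

Section SigmaNontrivial.
Variables (R : realType) (D : Zsubgroup R) (phi : Walnut D -> Walnut D).
Hypothesis phiM : {morph phi : x y / (x * y)%g}.
Hypothesis phi_inj : injective phi.
Hypothesis Ddisc : discrete_subset (zcarrier D).
Hypothesis Dinf : infinite_set (zcarrier D).
Variable k0 : SO2 R.
Hypothesis sigma_k0 : sigma phi k0 != k0.
Local Notation sigma := (sigma phi).
Local Notation m11 := (phia phi 1 0).
Local Notation m12 := (phia phi 0 1).
Local Notation m21 := (phib phi 1 0).
Local Notation m22 := (phib phi 0 1).

Lemma phi_reflection : m22 = - m11 /\ m12 = m21.
Proof.
have [E1 E2 E3 E4] := phi_rot_basis phiM k0.
apply: (intertwine_rotations _ E1 E2 E3 E4).
by apply: contraNneq sigma_k0 => -[ec es]; apply/eqP/SO2_eq; rewrite ?ec ?es.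
Qed.

Lemma m11_m21_circle : m11 ^+ 2 + m21 ^+ 2 = 1.
Proof.
have := norm_phidet phiM Ddisc Dinf phi_inj; rewrite /phidet.
have [-> ->] := phi_reflection.
have -> : m11 * - m11 - m21 * m21 = - (m11 ^+ 2 + m21 ^+ 2) by ring.
by rewrite normrN ger0_norm // addr_ge0 ?sqr_ge0.
Qed.

Lemma sigma_fixed m : sigma m = m -> m = 1%g \/ m = rot180 R.
Proof.
move=> sm; have [E1 E2 _ _] := phi_rot_basis phiM m.
have [w22 w12] := phi_reflection; rewrite sm w22 w12 in E1 E2.
have s0 : rsin m = 0.
  have h1 : rsin m * m21 = 0 by lra.
  have h2 : rsin m * m11 = 0 by lra.
  rewrite -[rsin m]mulr1 -m11_m21_circle.
  have -> : rsin m * (m11 ^+ 2 + m21 ^+ 2) = rsin m * m11 * m11 + rsin m * m21 * m21 by ring.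
  by rewrite h1 h2 !mul0r addr0.
have /eqP : rcos m ^+ 2 = 1 by rewrite -(rcos2D_rsin2 m) s0 expr0n addr0.
rewrite sqrf_eq1 => /orP [/eqP c1|/eqP c1]; [left|right]; apply: SO2_eq;
  by rewrite ?rcos1 ?rsin1 ?rcos_rotation ?rsin_rotation.
Qed.

Section FixedFunctional.
(* [l] is a nonzero fixed covector of the matrix [m] of [phi] on [N / Z]. *)
Variables l1 l2 : R.
Hypothesis l_nonzero : 0 < l1 ^+ 2 + l2 ^+ 2.
Hypothesis l_fixed1 : l1 * m11 + l2 * m21 = l1.
Hypothesis l_fixed2 : l1 * m21 - l2 * m11 = l2.

Definition Lfun (w : Walnut D) := l1 * wa w + l2 * wb w.

Lemma LfunMN a b : wrot a = 1%g -> Lfun (a * b)%g = Lfun a + Lfun b.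
Proof. by move=> a1; rewrite /Lfun waMN // wbMN //; ring. Qed.

Lemma LfunVN a : wrot a = 1%g -> Lfun a^-1%g = - Lfun a.
Proof. by move=> a1; rewrite /Lfun waVN // wbVN //; ring. Qed.

Lemma Lfun_phiN a : wrot a = 1%g -> Lfun (phi a) = Lfun a.
Proof.
move=> a1; have [pa pb] := phi_N phiM a1.
have [w22 w12] := phi_reflection.
rewrite /Lfun pa pb phia_linear // phib_linear // w22 w12.
have -> : l1 * (wa a * m11 + wb a * m21) + l2 * (wa a * m21 + wb a * - m11) =
  wa a * (l1 * m11 + l2 * m21) + wb a * (l1 * m21 - l2 * m11) by ring.
by rewrite l_fixed1 l_fixed2; ring.
Qed.

Definition twist_defect m := Lfun (embK D m * (phi (embK D m))^-1)%g.

(* Write [g = n e] with [n] in [N] and [e] a rotation fixed by [sigma]; then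
   [g x phi(g)^-1 = (g x g^-1) (n (e phi(e)^-1) phi(n)^-1)] and [Lfun] sees
   [n] and [phi n] cancel. *)
Lemma Lfun_twisted (g x : Walnut D) : wrot x = 1%g -> wrot (g * x * (phi g)^-1)%g = 1%g ->
  Lfun (g * x * (phi g)^-1)%g = Lfun x + twist_defect 1%g \/
  Lfun (g * x * (phi g)^-1)%g = - Lfun x + twist_defect (rot180 R).
Proof.
move=> x1; rewrite (wrot_twisted phiM) x1 mulg1 => /divg1_eq /esym sm.
set m := wrot g in sm *; set e := embK D m.
have [n n1 gE] : exists2 n, wrot n = 1%g & g = (n * e)%g.
  exists (g * e^-1)%g; last by rewrite mulgVK.
  by rewrite wrotM (morphV (@wrotM _ D)) /e wrot_embK mulgV.
have e1 : wrot (e * (phi e)^-1)%g = 1%g.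
  by rewrite wrotM (morphV (@wrotM _ D)) (wrot_phi phiM) /e wrot_embK sm mulgV.
have [c1 ca cb] := wconjN g x1.
have s0 : rsin m = 0 by case: (sigma_fixed sm) => ->; rewrite ?rsin1 ?rsin_rotation.
have Ly : Lfun (g * x * (phi g)^-1)%g = rcos m * Lfun x + twist_defect m.
  have -> : (g * x * (phi g)^-1 = (g * x * g^-1) * (n * (e * (phi e)^-1) * (phi n)^-1))%g.
    by rewrite {2 4}gE phiM !invgM !mulgA !mulgVK.
  have ne1 : wrot (n * (e * (phi e)^-1))%g = 1%g by rewrite wrotM n1 e1 mulg1.
  rewrite (LfunMN _ c1) (LfunMN _ ne1) (LfunMN _ n1) (LfunVN (wrot_phiN phiM n1)).
  by rewrite (Lfun_phiN n1) /twist_defect -/e {1}/Lfun ca cb -/m s0 /Lfun; ring.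
by case: (sigma_fixed sm) => em; rewrite Ly em ?rcos1 ?rcos_rotation ?mul1r ?mulN1r;
  [left|right].
Qed.

Lemma Reidemeister_fixed_functional : Reidemeister_infinite *%g (fun x => x^-1)%g phi.
Proof.
set K := `|twist_defect 1%g| + `|twist_defect (rot180 R)|.
set T := (K + 1) / (l1 ^+ 2 + l2 ^+ 2).
pose F (n : nat) := embH D (n%:R * T * l1) (n%:R * T * l2).
have LF n : Lfun (F n) = n%:R * (K + 1).
  by rewrite /Lfun wa_embH wb_embH /T; field; rewrite gt_eqF.
apply: (Reidemeister_infinite_family (morph1 phiM) (F := F)) => n m [g e].
have Fn1 : wrot (F n) = 1%g by exact: wrot_embH.
have := @Lfun_twisted g (F n) Fn1; rewrite -e wrot_embH => /(_ erefl); rewrite !LF.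
by apply: nat_separated; rewrite /K ?lerDl ?lerDr.
Qed.

End FixedFunctional.

Lemma Reidemeister_sigma_nontrivial : Reidemeister_infinite *%g (fun x => x^-1)%g phi.
Proof.
have [l1 [l2 [l0 l_fixed1 l_fixed2]]] := reflection_fixed_vector m11_m21_circle.
exact: (Reidemeister_fixed_functional l0 l_fixed1 l_fixed2).
Qed.

End SigmaNontrivial.

Theorem proposition5p6 (R : realType) (D : Zsubgroup R) :
  discrete_subset (zcarrier D) -> infinite_set (zcarrier D) ->
  topological_R_infinity (@Wmul R D) (@Winv R D).
Proof.
move=> Ddisc Dinf phi [phiM [psi [phiK _ _ _]]].
have [sigma_id|/existsNP [k0 /eqP sigma_k0]] := pselect (forall k, sigma phi k = k).
  exact: Reidemeister_sigma_id.
exact: (Reidemeister_sigma_nontrivial phiM (can_inj phiK) Ddisc Dinf sigma_k0).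
Qed.
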